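(* Let $X = \{x\in\mathbb{R}^n_+ : A_x x \ge b_x\}$ and $Y = \{y\in\mathbb{R}^m_+ : A_y y\ge b_y\}$, and $Q\in\mathbb{R}^{n\times m}_{\ge 0}$. Assume $\min\{c^\top x + d^\top y : x = Qy,\ x\in X,\ y\in Y\}$ has a finite optimal value. Let $(\hat\gamma,\hat\nu)$ be an optimal solution of $$\max_{\gamma,\nu}\{\gamma^\top b_x + \nu^\top b_y : Q^\top A_x^\top\gamma + A_y^\top\nu \le Q^\top c + d,\ \gamma\ge 0,\ \nu\ge 0\}$$ (the dual of $\min\{(Q^\top c + d)^\top y : A_x Q y\ge b_x,\ A_y y\ge b_y,\ y\ge 0\}$), and set $\hat\alpha := c - A_x^\top\hat\gamma$. Then $\hat\alpha$ is an optimal solution of $$\max_{\alpha\in\mathbb{R}^n}\{\sigma_X(c - \alpha) + \sigma_Y(Q^\top\alpha + d)\}.$$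
   Context: For $\mathcal{X}\subseteq\mathbb{R}^k$, $\sigma_{\mathcal{X}}(\alpha) := \inf_{x\in\mathcal{X}}\alpha^\top x$. $c\in\mathbb{R}^n$, $d\in\mathbb{R}^m$, and $A_x, b_x, A_y, b_y$ are matrices/vectors of compatible dimensions. *)

From mathcomp Require Import all_boot all_order all_algebra.
From mathcomp Require Import all_classical all_reals ereal.
Set Implicit Arguments. Unset Strict Implicit. Unset Printing Implicit Defensive.
Import Order.TTheory GRing.Theory Num.Theory.
Local Open Scope ring_scope.
Local Open Scope classical_set_scope.

Section Defs.
Variable R : realType.

Definition dotv k (a x : 'cV[R]_k) : R := (a^T *m x) 0 0.

Definition vle k (u v : 'cV[R]_k) : Prop := forall i, u i 0 <= v i 0.

Definition polyset k p (A : 'M[R]_(p, k)) (b : 'cV[R]_p) : set 'cV[R]_k :=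
  [set x | vle 0 x /\ vle b (A *m x)].

Definition sigma k (S : set 'cV[R]_k) (alpha : 'cV[R]_k) : \bar R :=
  ereal_inf [set (dotv alpha x)%:E | x in S].
End Defs.

(* For every alpha and every coupled feasible point (Q y, y), the two support
   functions are bounded by (c - alpha)^T Q y + (Q^T alpha + d)^T y = c^T Q y + d^T y,
   so the objective is at most the optimal value of the coupled LP.  By LP strong
   duality, obtained from Farkas' lemma applied to the homogenized primal, that value
   is at most gamma^T b_x + nu^T b_y.  Finally c - alpha_hat = A_x^T gamma and, by dual
   feasibility, Q^T alpha_hat + d >= A_y^T nu, so weak duality on X and on Y shows
   that alpha_hat attains this bound. *)

From mathcomp Require Import all_boot all_order all_algebra.
From mathcomp Require Import all_classical all_reals ereal.
From mathcomp Require Import ring lra.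
Import Order.TTheory GRing.Theory Num.Theory.
Local Open Scope ring_scope.
Local Open Scope classical_set_scope.

Section LinearProgramming.
Variable R : realType.
Set Implicit Arguments. Unset Strict Implicit. Unset Printing Implicit Defensive.

Section DotProduct.
Implicit Types k p : nat.

Lemma dotvE k (a x : 'cV[R]_k) : dotv a x = \sum_i a i 0 * x i 0.
Proof. by rewrite /dotv !mxE; apply: eq_bigr => i _; rewrite mxE. Qed.

Lemma dotvC k (a x : 'cV[R]_k) : dotv a x = dotv x a.
Proof. by rewrite !dotvE; apply: eq_bigr => i _; rewrite mulrC. Qed.

Lemma dotvDl k (a b x : 'cV[R]_k) : dotv (a + b) x = dotv a x + dotv b x.
Proof. by rewrite !dotvE -big_split; apply: eq_bigr => i _; rewrite mxE mulrDl. Qed.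

Lemma dotvZl k l (a x : 'cV[R]_k) : dotv (l *: a) x = l * dotv a x.
Proof. by rewrite !dotvE mulr_sumr; apply: eq_bigr => i _; rewrite mxE mulrA. Qed.

Lemma dotvBl k (a b x : 'cV[R]_k) : dotv (a - b) x = dotv a x - dotv b x.
Proof. by rewrite dotvDl -scaleN1r dotvZl mulN1r. Qed.

Lemma dotvDr k (a b x : 'cV[R]_k) : dotv x (a + b) = dotv x a + dotv x b.
Proof. by rewrite !(dotvC x) dotvDl. Qed.

Lemma dotvZr k l (a x : 'cV[R]_k) : dotv x (l *: a) = l * dotv x a.
Proof. by rewrite !(dotvC x) dotvZl. Qed.

Lemma dotvBr k (a b x : 'cV[R]_k) : dotv x (a - b) = dotv x a - dotv x b.
Proof. by rewrite !(dotvC x) dotvBl. Qed.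

Lemma dotv0l k (x : 'cV[R]_k) : dotv 0 x = 0.
Proof. by rewrite -(scale0r 0) dotvZl mul0r. Qed.

Lemma dotv_trmx k p (A : 'M[R]_(p, k)) g x : dotv (A^T *m g) x = dotv g (A *m x).
Proof. by rewrite /dotv trmx_mul trmxK mulmxA. Qed.

Lemma dotv_col k p (A : 'M[R]_(k, p)) i z : dotv (col i A) z = (A^T *m z) i 0.
Proof. by rewrite /dotv tr_col -row_mul mxE. Qed.

Lemma dotv_col_mx p1 p2 (a1 x1 : 'cV[R]_p1) (a2 x2 : 'cV[R]_p2) :
  dotv (col_mx a1 a2) (col_mx x1 x2) = dotv a1 x1 + dotv a2 x2.
Proof. by rewrite /dotv tr_col_mx mul_row_col mxE. Qed.

Lemma dotv_vle k (g u v : 'cV[R]_k) : vle 0 g -> vle u v -> dotv g u <= dotv g v.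
Proof.
move=> g_ge0 le_uv; rewrite !dotvE; apply: ler_sum => i _.
by apply: ler_wpM2l => //; have := g_ge0 i; rewrite mxE.
Qed.

Lemma subv_ge0 k (u v : 'cV[R]_k) : vle 0 (v - u) <-> vle u v.
Proof. by split=> h i; have := h i; rewrite !mxE subr_ge0. Qed.

Lemma vle_col_mx p1 p2 (a c : 'cV[R]_p1) (b d : 'cV[R]_p2) :
  vle (col_mx a b) (col_mx c d) <-> vle a c /\ vle b d.
Proof.
split=> [h | [h1 h2] i]; first by split=> i;
  [have := h (lshift p2 i) | have := h (rshift p1 i)]; rewrite ?col_mxEu ?col_mxEd.
by rewrite -(splitK i); case: (fintype.split i) => j /=; rewrite ?col_mxEu ?col_mxEd.
Qed.

Lemma vle0_col_mx p1 p2 (a : 'cV[R]_p1) (b : 'cV[R]_p2) :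
  vle 0 (col_mx a b) <-> vle 0 a /\ vle 0 b.
Proof. by rewrite -col_mx0 vle_col_mx. Qed.

Lemma vle0_mulmx k p (Q : 'M[R]_(p, k)) y :
  (forall i j, 0 <= Q i j) -> vle 0 y -> vle 0 (Q *m y).
Proof.
move=> Q_ge0 y_ge0 i; rewrite !mxE; apply: sumr_ge0 => j _.
by apply: mulr_ge0 => //; have := y_ge0 j; rewrite mxE.
Qed.

End DotProduct.

Section Farkas.
Variable k : nat.
Implicit Types (a b u v w x : 'cV[R]_k) (s : seq 'cV[R]_k).

Fixpoint in_cone s w : Prop :=
  if s is a :: s' then exists2 l, 0 <= l & in_cone s' (w - l *: a) else w = 0.

Lemma in_cone_dotv_ge0 s u x :
  in_cone s u -> {in s, forall a, 0 <= dotv a x} -> 0 <= dotv u x.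
Proof.
elim: s u => [|a s IH] u /=; first by move=> ->; rewrite dotv0l.
case=> l l_ge0 /IH + s_ge0 => /(_ (fun b sb => s_ge0 b (mem_behead (s := a :: s) sb))).
rewrite dotvBl dotvZl subr_ge0; apply: le_trans.
by apply: mulr_ge0 => //; apply: s_ge0; rewrite mem_head.
Qed.

Definition proj_along a x0 b := b - (dotv b x0 / dotv a x0) *: a.

Lemma dotv_proj_along a x0 b x :
  dotv (proj_along a x0 b) x = dotv b (x - (dotv a x / dotv a x0) *: x0).
Proof. by rewrite /proj_along dotvBl dotvZl dotvBr dotvZr; ring. Qed.

Lemma in_cone_proj_along a x0 s v :
  in_cone [seq proj_along a x0 b | b <- s] v ->
  exists u mu, in_cone s u /\ v = u + mu *: a.
Proof.
elim: s v => [|b s IH] v /=; first by move=> ->; exists 0, 0; rewrite scale0r addr0.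
case=> l l_ge0 /IH [u [mu [Hu Hv]]].
exists (u + l *: b), (mu - l * (dotv b x0 / dotv a x0)); split.
  by exists l; rewrite ?addrK.
rewrite -(subrK (l *: proj_along a x0 b) v) Hv /proj_along scalerBr scalerA.
by rewrite scalerBl addrACA addrC.
Qed.

(* A point x0 separating w from the cone of s has a^T x0 < 0; projecting every
   generator along a onto the hyperplane x0^T x = 0 removes the generator a. *)
Lemma farkas_seq s w :
  (forall x, {in s, forall a, 0 <= dotv a x} -> 0 <= dotv w x) -> in_cone s w.
Proof.
move Hn : (size s) => n; elim: n s w Hn => [|n IH] [|a s] w //= Hn Hw.
  apply/matrixP => i j; rewrite (ord1 j) mxE; apply/eqP; rewrite eq_le.
  have no_gen (x : 'cV[R]_k) : {in [::], forall a, 0 <= dotv a x} by [].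
  have := Hw _ (no_gen (delta_mx i 0)); have := Hw _ (no_gen (- delta_mx i 0)).
  by rewrite -scaleN1r dotvZr mulN1r oppr_ge0 /dotv -colE !mxE => -> ->.
case: Hn => Hn.
have [Hs | /existsNP [x0 /not_implyP [s_x0 /negP]]] :=
  pselect (forall x, {in s, forall b, 0 <= dotv b x} -> 0 <= dotv w x).
  by exists 0; rewrite // scale0r subr0; apply: IH.
rewrite -ltNge => w_x0.
have a_x0 : dotv a x0 < 0.
  rewrite ltNge; apply/negP => a_x0; move: w_x0; rewrite ltNge Hw //.
  by move=> b; rewrite inE => /orP[/eqP-> // | /s_x0].
pose p := proj_along a x0.
have : in_cone [seq p b | b <- s] (p w).
  apply: IH; first by rewrite size_map.
  move=> x Hx; rewrite dotv_proj_along; apply: Hw => b; rewrite inE.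
  case/orP=> [/eqP-> | sb]; last by rewrite -dotv_proj_along; apply/Hx/map_f.
  by rewrite dotvBr dotvZr divfK ?lt_eqF // subrr.
case/in_cone_proj_along=> u [mu [Hu Hpw]].
have Hw_dec : w = u + (mu + dotv w x0 / dotv a x0) *: a.
  by rewrite scalerDl addrA -Hpw subrK.
exists (mu + dotv w x0 / dotv a x0); last by rewrite {1}Hw_dec addrK.
have u_x0 := in_cone_dotv_ge0 Hu s_x0.
have : dotv w x0 = dotv u x0 + (mu + dotv w x0 / dotv a x0) * dotv a x0.
  by rewrite {1}Hw_dec dotvDl dotvZl.
nra.
Qed.

End Farkas.

Section FarkasMx.
Variables k p : nat.

Lemma in_cone_cols (L : 'M[R]_(k, p)) r w :
  in_cone [seq col i L | i <- r] w -> exists2 lam, vle 0 lam & w = L *m lam.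
Proof.
elim: r w => [|i r IH] w /=; first by move=> ->; exists 0; rewrite ?mulmx0 // => j; rewrite mxE.
case=> l l_ge0 /IH [lam lam_ge0 Hw]; exists (lam + l *: delta_mx i 0).
  move=> j; rewrite !mxE; apply: addr_ge0; first by have := lam_ge0 j; rewrite mxE.
  by apply: mulr_ge0 => //; rewrite ler0n.
by rewrite mulmxDr -scalemxAr -colE -Hw subrK.
Qed.

Lemma farkas (L : 'M[R]_(k, p)) w :
  (forall z, vle 0 (L^T *m z) -> 0 <= dotv w z) -> exists2 lam, vle 0 lam & w = L *m lam.
Proof.
move=> Hw; apply: (@in_cone_cols L (enum 'I_p)); apply: farkas_seq => z Hz.
apply: Hw => i; rewrite mxE -dotv_col; apply: Hz.
by apply: map_f; rewrite mem_enum.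
Qed.

End FarkasMx.

Section LPDuality.
Variables (k p : nat) (N : 'M[R]_(p, k)) (beta : 'cV[R]_p).
Variables (w : 'cV[R]_k) (t : R).
Hypothesis lp_feasible : exists y0, vle beta (N *m y0).
Hypothesis lp_bounded : forall y, vle beta (N *m y) -> t <= dotv w y.

Lemma lp_recession_ge0 y : vle 0 (N *m y) -> 0 <= dotv w y.
Proof.
move=> Ny_ge0; rewrite leNgt; apply/negP => wy_lt0.
have [y0 Hy0] := lp_feasible; have ty0 := lp_bounded Hy0.
pose r := (dotv w y0 - t + 1) / - dotv w y.
have r_ge0 : 0 <= r by apply: divr_ge0; lra.
have : vle beta (N *m (y0 + r *: y)).
  move=> i; rewrite mulmxDr -scalemxAr [X in _ <= X]mxE [X in _ <= _ + X]mxE.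
  have := Hy0 i; have := Ny_ge0 i; rewrite mxE => /(mulr_ge0 r_ge0); lra.
move/lp_bounded; rewrite dotvDr dotvZr /r invrN mulrN mulNr divfK ?lt_eqF //.
lra.
Qed.

Lemma lp_homogeneous_bound y s :
  0 <= s -> vle (s *: beta) (N *m y) -> t * s <= dotv w y.
Proof.
rewrite le0r => /orP[/eqP-> | s_gt0] Hy.
  by rewrite mulr0; apply: lp_recession_ge0; rewrite -(scale0r beta).
have : vle beta (N *m (s^-1 *: y)).
  move=> i; rewrite -scalemxAr mxE -(ler_pM2l s_gt0) mulrA divff ?gt_eqF // mul1r.
  by have := Hy i; rewrite mxE.
move/lp_bounded; rewrite dotvZr -(ler_pM2l s_gt0) mulrA divff ?gt_eqF // mul1r.
by rewrite mulrC.
Qed.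

(* Farkas applied to the homogenization [N y >= s beta, s >= 0] of the primal. *)
Lemma lp_strong_duality :
  exists lam, [/\ vle 0 lam, N^T *m lam = w & t <= dotv beta lam].
Proof.
pose L := block_mx N^T 0 (- beta^T) (1 : 'M[R]_1).
have : forall z, vle 0 (L^T *m z) -> 0 <= dotv (col_mx w (- t%:M)) z.
  move=> z; rewrite -[z]vsubmxK tr_block_mx !trmxK trmx0 trmx1 linearN /= trmxK.
  rewrite mul_block_col mul0mx mul1mx add0r mulNmx [dsubmx z]mx11_scalar.
  set s := dsubmx z 0 0; rewrite mul_mx_scalar => /vle0_col_mx[Hy Hs].
  rewrite dotv_col_mx [dotv (- _) _]/dotv mxE big_ord1 !mxE /= !mulr1n mulNr subr_ge0.
  apply: lp_homogeneous_bound; last exact/subv_ge0.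
  by have := Hs 0; rewrite !mxE /= mulr1n.
case/farkas=> lam; rewrite -[lam]vsubmxK => /vle0_col_mx[lam_ge0 mu_ge0].
rewrite mul_block_col mul0mx addr0 mul1mx mulNmx => /eq_col_mx[Hw /matrixP/(_ 0 0)].
rewrite !mxE /= mulr1n => Ht; exists (usubmx lam); split=> //.
by have := mu_ge0 0; rewrite !mxE /dotv mxE; lra.
Qed.

End LPDuality.

Lemma sigma_polyset_ge k p (A : 'M[R]_(p, k)) b g alpha :
  vle 0 g -> vle (A^T *m g) alpha -> ((dotv g b)%:E <= sigma (polyset A b) alpha)%E.
Proof.
move=> g_ge0 le_alpha; apply: le_ereal_inf_tmp => _ [x [x_ge0 Hx] <-].
rewrite lee_fin (le_trans (dotv_vle g_ge0 Hx)) // -dotv_trmx.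
by rewrite dotvC [dotv alpha _]dotvC; apply: dotv_vle.
Qed.

Lemma sigma_add_le_coupled_inf n m (X : set 'cV[R]_n) (Y : set 'cV[R]_m)
    (Q : 'M[R]_(n, m)) c d alpha :
  (sigma X (c - alpha) + sigma Y (Q^T *m alpha + d)
   <= ereal_inf [set ((dotv c xy.1 + dotv d xy.2)%:E : \bar R) |
        xy in [set xy | xy.1 = Q *m xy.2 /\ X xy.1 /\ Y xy.2]])%E.
Proof.
apply: le_ereal_inf_tmp => _ [[x y] /= [-> [Xx Yy]] <-].
have -> : dotv c (Q *m y) + dotv d y
          = dotv (c - alpha) (Q *m y) + dotv (Q^T *m alpha + d) y.
  by rewrite dotvBl dotvDl dotv_trmx addrA subrK.
by rewrite EFinD; apply: leeD; apply: ereal_inf_lbound; [exists (Q *m y) | exists y].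
Qed.

Lemma coupled_inf_le_dual n m px py (Ax : 'M[R]_(px, n)) bx (Ay : 'M[R]_(py, m)) by_
    (Q : 'M[R]_(n, m)) c d (D : R) :
  (forall i j, 0 <= Q i j) ->
  let S := [set ((dotv c xy.1 + dotv d xy.2)%:E : \bar R) |
      xy in [set xy | xy.1 = Q *m xy.2 /\ polyset Ax bx xy.1 /\ polyset Ay by_ xy.2]] in
  ereal_inf S \is a fin_num ->
  (forall g v, vle (Q^T *m Ax^T *m g + Ay^T *m v) (Q^T *m c + d) -> vle 0 g -> vle 0 v ->
     dotv g bx + dotv v by_ <= D) ->
  (ereal_inf S <= D%:E)%E.
Proof.
move=> Q_ge0 S S_fin dual_le; rewrite -(fineK S_fin) lee_fin.
pose N := col_mx (Ax *m Q) (col_mx Ay 1%:M).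
pose beta := col_mx bx (col_mx by_ (0 : 'cV[R]_m)).
have feasibleE y :
    vle beta (N *m y) <-> [/\ vle bx (Ax *m (Q *m y)), vle by_ (Ay *m y) & vle 0 y].
  by rewrite !mul_col_mx mul1mx mulmxA !vle_col_mx; split=> [[? []] | []].
have [lam [lam_ge0 Nlam t_le]] : exists lam, [/\ vle 0 lam,
    N^T *m lam = Q^T *m c + d & fine (ereal_inf S) <= dotv beta lam].
  apply: lp_strong_duality.
    have [_ [[_ y] /= [-> [[_ Hx] [Hy y_ge0]]] _]] : S !=set0.
      by apply/set0P/negP => /eqP S0; move: S_fin; rewrite S0 ereal_inf0.
    by exists y; apply/feasibleE.
  move=> y /feasibleE[Hx Hy y_ge0]; rewrite -lee_fin fineK // dotvDl dotv_trmx.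
  apply: ereal_inf_lbound; exists (Q *m y, y) => //.
  by split=> //; split; split=> //; apply: vle0_mulmx.
rewrite -[lam]vsubmxK -[dsubmx lam]vsubmxK in lam_ge0 Nlam t_le.
set g := usubmx lam in lam_ge0 Nlam t_le; set v := usubmx _ in lam_ge0 Nlam t_le.
set mu := dsubmx _ in lam_ge0 Nlam t_le.
move: lam_ge0 => /vle0_col_mx[g_ge0 /vle0_col_mx[v_ge0 mu_ge0]].
rewrite /N !tr_col_mx trmx1 trmx_mul !mul_row_col mul1mx in Nlam.
rewrite /beta !dotv_col_mx dotv0l addr0 in t_le.
apply: (le_trans t_le); rewrite dotvC [dotv by_ _]dotvC; apply: dual_le => //.
by apply/subv_ge0; rewrite -Nlam addrA (addrC _ mu) addrK.
Qed.

End LinearProgramming.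

Theorem mainTheorem9 (R : realType) (n m px py : nat)
  (Ax : 'M[R]_(px, n)) (bx : 'cV[R]_px) (Ay : 'M[R]_(py, m)) (by_ : 'cV[R]_py)
  (Q : 'M[R]_(n, m)) (c : 'cV[R]_n) (d : 'cV[R]_m)
  (HQ : forall i j, 0 <= Q i j)
  (Hfinite : ereal_inf [set ((dotv c xy.1 + dotv d xy.2)%:E : \bar R) |
       xy in [set xy : 'cV[R]_n * 'cV[R]_m |
              xy.1 = Q *m xy.2 /\ polyset Ax bx xy.1 /\ polyset Ay by_ xy.2]]
     \is a fin_num)
  (gam : 'cV[R]_px) (nu : 'cV[R]_py)
  (Hfeas : vle (Q^T *m Ax^T *m gam + Ay^T *m nu) (Q^T *m c + d)
           /\ vle 0 gam /\ vle 0 nu)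
  (Hopt : forall (g : 'cV[R]_px) (v : 'cV[R]_py),
      vle (Q^T *m Ax^T *m g + Ay^T *m v) (Q^T *m c + d) -> vle 0 g -> vle 0 v ->
      dotv g bx + dotv v by_ <= dotv gam bx + dotv nu by_) :
  let alpha_hat := c - Ax^T *m gam in
  forall alpha : 'cV[R]_n,
    (sigma (polyset Ax bx) (c - alpha) + sigma (polyset Ay by_) (Q^T *m alpha + d)
     <= sigma (polyset Ax bx) (c - alpha_hat)
        + sigma (polyset Ay by_) (Q^T *m alpha_hat + d))%E.
Proof.
move=> alpha_hat alpha; case: Hfeas => dual_feas [gam_ge0 nu_ge0].
apply: le_trans (sigma_add_le_coupled_inf _ _ _ _ _ alpha) _.
apply: le_trans (coupled_inf_le_dual HQ Hfinite Hopt) _.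
rewrite EFinD; apply: leeD; apply: sigma_polyset_ge => //.
  by rewrite /alpha_hat opprB addrC subrK => i.
apply/subv_ge0; move/subv_ge0: dual_feas.
by rewrite /alpha_hat linearB /= mulmxA opprD addrA (addrAC (Q^T *m c)).
Qed.
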